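(* Let $A_1A_2A_3$ be a gyrotriangle in the Einstein gyrovector space $\mathbb{R}^n_s$ with gyroangles $\alpha_1,\alpha_2,\alpha_3$, side gyrolengths $a_{23},a_{13},a_{12}$ (where $a_{ij}=\|\ominus A_i\oplus A_j\|$), defect $\delta=\pi-\alpha_1-\alpha_2-\alpha_3$, and circumgyroradius $R$. Then, with $\gamma_{ij}=(1-a_{ij}^2/s^2)^{-1/2}$, $$\frac{\gamma_{23}a_{23}}{\sin\alpha_1}=\frac{\gamma_{13}a_{13}}{\sin\alpha_2}=\frac{\gamma_{12}a_{12}}{\sin\alpha_3}=\sqrt{\frac{(\gamma_{12}+1)(\gamma_{13}+1)(\gamma_{23}+1)}{2}}\,R$$ and $$\frac{\gamma_{23}a_{23}}{\sin\alpha_1}=\frac{\gamma_{13}a_{13}}{\sin\alpha_2}=\frac{\gamma_{12}a_{12}}{\sin\alpha_3}=2\,\frac{\sin(\alpha_1+\frac\delta2)\sin(\alpha_2+\frac\delta2)\sin(\alpha_3+\frac\delta2)}{\sin\alpha_1\sin\alpha_2\sin\alpha_3}\,R.$$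
   Context: Fix $s>0$, $n\ge2$; $\mathbb{R}^n_s=\{v\in\mathbb{R}^n:\|v\|<s\}$ with Einstein addition $u\oplus v=\frac{1}{1+u\cdot v/s^2}\{u+\frac{1}{\gamma_u}v+\frac{1}{s^2}\frac{\gamma_u}{1+\gamma_u}(u\cdot v)u\}$, $\gamma_v=(1-\|v\|^2/s^2)^{-1/2}$, $\ominus v=-v$. A gyrotriangle $A_1A_2A_3$ has gyrobarycentrically independent vertices ($\ominus A_1\oplus A_2,\ominus A_1\oplus A_3$ linearly independent); its gyroangle at $A_1$ is $\alpha_1$ with $\cos\alpha_1=\frac{(\ominus A_1\oplus A_2)\cdot(\ominus A_1\oplus A_3)}{\|\ominus A_1\oplus A_2\|\|\ominus A_1\oplus A_3\|}$, similarly for the others. Its circumgyrocenter $O$ is the point of $(A_1\oplus\mathrm{span}\{\ominus A_1\oplus A_2,\ominus A_1\oplus A_3\})\cap\mathbb{R}^n_s$ equigyrodistant from the three vertices (assumed here to exist), and the circumgyroradius is $R=\|\ominus A_1\oplus O\|$. *)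

From HB Require Import structures.
From mathcomp Require Import all_boot all_order all_algebra.
From mathcomp Require Import all_classical all_reals all_analysis.
Set Implicit Arguments. Unset Strict Implicit. Unset Printing Implicit Defensive.
Import Order.TTheory GRing.Theory Num.Theory.
Local Open Scope ring_scope.

Section Einstein.
Variables (R : realType) (n : nat).

Definition dotv (u v : 'rV[R]_n) : R := \sum_(i < n) u 0 i * v 0 i.
Definition normv (v : 'rV[R]_n) : R := Num.sqrt (dotv v v).

Definition in_ball (s : R) (v : 'rV[R]_n) : Prop := normv v < s.

Definition gammav (s : R) (v : 'rV[R]_n) : R :=
  (Num.sqrt (1 - normv v ^+ 2 / s ^+ 2))^-1.

Definition eadd (s : R) (u v : 'rV[R]_n) : 'rV[R]_n :=
  (1 + dotv u v / s ^+ 2)^-1 *: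
    (u + (gammav s u)^-1 *: v
       + ((s ^+ 2)^-1 * (gammav s u / (1 + gammav s u)) * dotv u v) *: u).

Definition eopp (v : 'rV[R]_n) : 'rV[R]_n := - v.

Definition gdiff (s : R) (A B : 'rV[R]_n) : 'rV[R]_n := eadd s (eopp A) B.

Definition gdist (s : R) (A B : 'rV[R]_n) : R := normv (gdiff s A B).

Definition lin_indep2 (u v : 'rV[R]_n) : Prop :=
  forall a b : R, a *: u + b *: v = 0 -> a = 0 /\ b = 0.

(* gyrotriangle: three points of the ball, gyrobarycentrically independent *)
Definition gyrotriangle (s : R) (A1 A2 A3 : 'rV[R]_n) : Prop :=
  [/\ in_ball s A1, in_ball s A2, in_ball s A3 &
      lin_indep2 (gdiff s A1 A2) (gdiff s A1 A3)].

Definition gyroangle (s : R) (A B C : 'rV[R]_n) : R :=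
  acos (dotv (gdiff s A B) (gdiff s A C) /
        (normv (gdiff s A B) * normv (gdiff s A C))).

Definition circumgyrocenter (s : R) (A1 A2 A3 O : 'rV[R]_n) : Prop :=
  [/\ in_ball s O,
      exists w : 'rV[R]_n, in_ball s w /\
        (exists c1 c2 : R, w = c1 *: gdiff s A1 A2 + c2 *: gdiff s A1 A3) /\
        O = eadd s A1 w,
      gdist s A1 O = gdist s A2 O &
      gdist s A1 O = gdist s A3 O].

Definition gammal (s a : R) : R := (Num.sqrt (1 - a ^+ 2 / s ^+ 2))^-1.

End Einstein.

From HB Require Import structures.
From mathcomp Require Import all_boot all_order all_algebra.
From mathcomp Require Import all_classical all_reals all_analysis.
From mathcomp Require Import ring lra.
Import Order.TTheory GRing.Theory Num.Theory.
Local Open Scope ring_scope.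
Set Implicit Arguments. Unset Strict Implicit. Unset Printing Implicit Defensive.

(* Everything is expressed through the gamma factors p, q, r of the sides
   A2A3, A1A3, A1A2 and the gamma factor rho of the circumgyroradius.  The gamma
   identity turns the gyroangles into cos a1 = (q r - p) / (sinh q sinh r) and
   sin a1 = sqrt D / (sinh q sinh r), where sinh g = sqrt (g^2 - 1) and D is the
   Gram determinant of the gamma factors; since g a = s sinh g, each ratio
   g a / sin a equals s sinh p sinh q sinh r / sqrt D.
   The circumgyrocenter is a barycentric combination of the vertices, which makes
   gamma_{P O} an affine combination of the gamma_{P Ai}; equigyrodistance then
   gives a linear system whose solvability forces
   (rho^2 - 1) D = 2 rho^2 (p - 1)(q - 1)(r - 1), i.e. the first formula.
   For the second, sin^2 (a1 + delta/2) = (1 + cos (a1 - a2 - a3)) / 2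
   = D / (2 (p + 1)(q - 1)(r - 1)), and the product of the three such terms
   divided by the product of the sines is sqrt ((p + 1)(q + 1)(r + 1) / 2). *)

Section DotProduct.
Variables (R : realType) (n : nat).
Implicit Types (u v w : 'rV[R]_n) (a : R).

Lemma dotvC u v : dotv u v = dotv v u.
Proof. by apply: eq_bigr => i _; rewrite mulrC. Qed.

Lemma dotvDl u v w : dotv (u + v) w = dotv u w + dotv v w.
Proof. by rewrite /dotv -big_split; apply: eq_bigr => i _; rewrite mxE mulrDl. Qed.

Lemma dotvDr u v w : dotv w (u + v) = dotv w u + dotv w v.
Proof. by rewrite dotvC dotvDl !(dotvC w). Qed.

Lemma dotvZl a u v : dotv (a *: u) v = a * dotv u v.
Proof. by rewrite /dotv mulr_sumr; apply: eq_bigr => i _; rewrite mxE mulrA. Qed.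

Lemma dotvZr a u v : dotv v (a *: u) = a * dotv v u.
Proof. by rewrite dotvC dotvZl dotvC. Qed.

Lemma dotvNl u v : dotv (- u) v = - dotv u v.
Proof. by rewrite -scaleN1r dotvZl mulN1r. Qed.

Lemma dotvNr u v : dotv v (- u) = - dotv v u.
Proof. by rewrite dotvC dotvNl dotvC. Qed.

Lemma dotv0r u : dotv u 0 = 0.
Proof. by rewrite /dotv big1 // => i _; rewrite mxE mulr0. Qed.

Lemma dotv_ge0 u : 0 <= dotv u u.
Proof. by apply: sumr_ge0 => i _; rewrite -expr2 sqr_ge0. Qed.

Lemma dotv_eq0 u : (dotv u u == 0) = (u == 0).
Proof.
apply/idP/eqP => [|->]; last by rewrite dotv0r.
rewrite psumr_eq0 => [/allP u0|i _]; last by rewrite -expr2 sqr_ge0.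
apply/rowP => j; have /implyP := u0 j (mem_index_enum _).
by rewrite -expr2 sqrf_eq0 mxE => /(_ isT)/eqP.
Qed.

Lemma normv_sqr u : normv u ^+ 2 = dotv u u.
Proof. by rewrite /normv sqr_sqrtr // dotv_ge0. Qed.

Lemma dotv_residual u v :
  let w := dotv v v *: u - dotv u v *: v in
  dotv w w = dotv v v * (dotv u u * dotv v v - dotv u v ^+ 2).
Proof.
by rewrite /= dotvDl !dotvDr !dotvNl !dotvNr !dotvZl !dotvZr (dotvC v u); ring.
Qed.

Lemma cauchy_schwarz u v : dotv u v ^+ 2 <= dotv u u * dotv v v.
Proof.
have [v0|v_neq0] := eqVneq v 0.
  by rewrite v0 !dotv0r expr0n mulr0.
have vv_gt0 : 0 < dotv v v by rewrite lt_def dotv_eq0 v_neq0 dotv_ge0.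
by rewrite -subr_ge0 -(pmulr_rge0 _ vv_gt0) -dotv_residual dotv_ge0.
Qed.

Lemma cauchy_schwarz_lt u v : lin_indep2 u v ->
  dotv u v ^+ 2 < dotv u u * dotv v v.
Proof.
move=> uv_indep.
have v_neq0 : v != 0.
  apply/eqP => v0; have [_ /eqP] : (0 : R) = 0 /\ (1 : R) = 0.
    by apply: uv_indep; rewrite v0 scale0r scaler0 addr0.
  by rewrite oner_eq0.
have vv_gt0 : 0 < dotv v v by rewrite lt_def dotv_eq0 v_neq0 dotv_ge0.
rewrite -subr_gt0 -(pmulr_rgt0 _ vv_gt0) -dotv_residual lt_def dotv_ge0 andbT.
rewrite dotv_eq0; apply/eqP => w0.
have [/eqP] : dotv v v = 0 /\ - dotv u v = 0 by apply: uv_indep; rewrite scaleNr.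
by rewrite gt_eqF.
Qed.

End DotProduct.


Section GammaTrigonometry.
Variable R : realType.
Implicit Types (a b c p q r rho x y : R).

(* [sinhg (cosh t) = sinh t]; a gyrolength [a] with gamma factor [g] satisfies
   [g * a = s * sinhg g] ([gammal_mul_gdist]). *)
Definition sinhg x := Num.sqrt (x ^+ 2 - 1).

(* Law of gyrocosines: in a gyrotriangle whose sides have gamma factors [p], [q],
   [r], the gyroangle opposite [p] is [gangle p q r] ([gyroangle_gangle]). *)
Definition gcos p q r := (q * r - p) / (sinhg q * sinhg r).

Definition gangle p q r := acos (gcos p q r).

(* The determinant of the Gram matrix [[1, r, q], [r, 1, p], [q, p, 1]];
   it is positive for a gyrotriangle ([gyrotriangle_gdet_gt0]). *)
Definition gdet p q r := 1 - p ^+ 2 - q ^+ 2 - r ^+ 2 + 2 * p * q * r.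

Lemma sinhg_sqr x : 1 <= x -> sinhg x ^+ 2 = x ^+ 2 - 1.
Proof. by move=> x_ge1; rewrite sqr_sqrtr // subr_ge0 exprn_ege1. Qed.

Lemma sinhg_ge0 x : 0 <= sinhg x.
Proof. exact: sqrtr_ge0. Qed.

Lemma sinhg_gt0 x : 1 < x -> 0 < sinhg x.
Proof. by move=> x_gt1; rewrite sqrtr_gt0 subr_gt0 exprn_egt1. Qed.

Lemma gcosC p q r : gcos p q r = gcos p r q.
Proof. by rewrite /gcos (mulrC q) (mulrC (sinhg q)). Qed.

Lemma gangleC p q r : gangle p q r = gangle p r q.
Proof. by rewrite /gangle gcosC. Qed.

Lemma gdet_swapl p q r : gdet q p r = gdet p q r.
Proof. by rewrite /gdet; ring. Qed.

Lemma gdet_swapr p q r : gdet p r q = gdet p q r.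
Proof. by rewrite /gdet; ring. Qed.

Lemma gdet_gt0_gt1 p q r : 1 <= p -> 1 <= q -> 1 <= r -> 0 < gdet p q r ->
  [/\ 1 < p, 1 < q & 1 < r].
Proof.
have gt1 a b c : 1 <= a -> 0 < gdet a b c -> 1 < a.
  rewrite le_eqVlt => /orP[/eqP <-|//].
  have -> : gdet 1 b c = - (b - c) ^+ 2 by rewrite /gdet; ring.
  by rewrite oppr_gt0 ltNge sqr_ge0.
move=> p1 q1 r1 hD; split; first exact: gt1 p1 hD.
  by apply: (gt1 q p r) q1 _; rewrite gdet_swapl.
by apply: (gt1 r p q) r1 _; rewrite gdet_swapl gdet_swapr.
Qed.

(* The hypotheses say [G l = rho 1] and [rho (1^T l) = 1] for the Gram matrix [G]
   of [gdet]; hence [rho^2 (1^T adj(G) 1) = det G], and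
   [1^T adj(G) 1 = gdet p q r - 2 (p - 1) (q - 1) (r - 1)]. *)
Lemma gdet_circum_relation p q r rho l1 l2 l3 :
  rho = l1 + l2 * r + l3 * q -> rho = l1 * r + l2 + l3 * p ->
  rho = l1 * q + l2 * p + l3 -> (l1 + l2 + l3) * rho = 1 ->
  (rho ^+ 2 - 1) * gdet p q r = 2 * rho ^+ 2 * ((p - 1) * (q - 1) * (r - 1)).
Proof.
move=> E1 E2 E3 E4; apply/eqP; rewrite -subr_eq0; apply/eqP.
transitivity (gdet p q r * ((l1 + l2 + l3) * rho - 1)
  - rho * ((1 - p ^+ 2 + (p * q - r) + (r * p - q)) * (l1 + l2 * r + l3 * q - rho)
         + (p * q - r + (1 - q ^+ 2) + (q * r - p)) * (l1 * r + l2 + l3 * p - rho)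
         + (r * p - q + (q * r - p) + (1 - r ^+ 2)) * (l1 * q + l2 * p + l3 - rho))).
  by rewrite /gdet; ring.
by rewrite E4 -E1 -E2 -E3 !subrr; ring.
Qed.

Lemma one_sub_gcos_sqr p q r : 1 < q -> 1 < r ->
  1 - gcos p q r ^+ 2 = gdet p q r / (sinhg q ^+ 2 * sinhg r ^+ 2).
Proof.
move=> q_gt1 r_gt1; rewrite /gcos expr_div_n exprMn !sinhg_sqr ?ltW //.
have q2 : q ^+ 2 - 1 != 0 by rewrite subr_eq0 gt_eqF // exprn_egt1.
have r2 : r ^+ 2 - 1 != 0 by rewrite subr_eq0 gt_eqF // exprn_egt1.
by rewrite /gdet; field; rewrite q2 r2.
Qed.

Section Triangle.
Variables p q r : R.
Hypotheses (q_gt1 : 1 < q) (r_gt1 : 1 < r) (gdet_gt0 : 0 < gdet p q r).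

Lemma gcos_bounds : -1 < gcos p q r < 1.
Proof.
have : 0 < 1 - gcos p q r ^+ 2.
  by rewrite one_sub_gcos_sqr // divr_gt0 // mulr_gt0 // exprn_gt0 // sinhg_gt0.
by move=> h; apply/andP; split; nra.
Qed.

Lemma gcos_itv : -1 <= gcos p q r <= 1.
Proof. by have /andP[lo hi] := gcos_bounds; rewrite !ltW. Qed.

Lemma cos_gangle : cos (gangle p q r) = gcos p q r.
Proof. by rewrite acosK // in_itv /= gcos_itv. Qed.

Lemma sin_gangle : sin (gangle p q r) = Num.sqrt (gdet p q r) / (sinhg q * sinhg r).
Proof.
have qr_gt0 : 0 < sinhg q * sinhg r by rewrite mulr_gt0 // sinhg_gt0.
rewrite sin_acos ?gcos_itv // one_sub_gcos_sqr // -exprMn.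
by rewrite sqrtrM ?ltW // sqrtrV ?exprn_ge0 ?ltW // sqrtr_sqr gtr0_norm.
Qed.

Lemma gangle_gt0_ltpi : 0 < gangle p q r < pi.
Proof.
have /andP[lo hi] := gcos_bounds.
by rewrite acos_gt0 ?acos_ltpi // ?lo ?hi ?andbT ?(ltW lo) ?(ltW hi).
Qed.

Lemma sinhg_div_sin_gangle :
  sinhg p / sin (gangle p q r)
  = sinhg p * sinhg q * sinhg r / Num.sqrt (gdet p q r).
Proof.
have q0 := sinhg_gt0 q_gt1; have r0 := sinhg_gt0 r_gt1.
have D0 : 0 < Num.sqrt (gdet p q r) by rewrite sqrtr_gt0.
by rewrite sin_gangle; field; rewrite !gt_eqF.
Qed.

End Triangle.

Lemma gcos_add p q r : 1 < p -> 1 < q -> 1 < r ->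
  gcos q p r + gcos r p q = (r * sinhg q + q * sinhg r) * (1 - gcos p q r) / sinhg p.
Proof.
move=> p_gt1 q_gt1 r_gt1.
have p0 := sinhg_gt0 p_gt1; have q0 := sinhg_gt0 q_gt1; have r0 := sinhg_gt0 r_gt1.
have key : (p * r - q) * sinhg q + (p * q - r) * sinhg r
    = (r * sinhg q + q * sinhg r) * (sinhg q * sinhg r - (q * r - p)).
  (* a ring identity modulo [sinhg x ^+ 2 = x ^+ 2 - 1] *)
  transitivity ((r * sinhg q + q * sinhg r) * (sinhg q * sinhg r - (q * r - p))
      + r * sinhg r * (q ^+ 2 - 1 - sinhg q ^+ 2)
      + q * sinhg q * (r ^+ 2 - 1 - sinhg r ^+ 2)); first by ring.
  by rewrite !sinhg_sqr ?ltW // !subrr !mulr0 !addr0.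
transitivity (((p * r - q) * sinhg q + (p * q - r) * sinhg r)
    / (sinhg p * sinhg q * sinhg r)).
  by rewrite /gcos; field; rewrite !gt_eqF.
by rewrite key /gcos; field; rewrite !gt_eqF.
Qed.

Lemma acos_add_ltpi x y : -1 <= x <= 1 -> -1 <= y <= 1 -> 0 < x + y ->
  acos x + acos y < pi.
Proof.
move=> x1 y1 xy_gt0.
have Ny1 : -1 <= - y <= 1 by rewrite lerNl opprK andbC lerNl.
rewrite -ltrBrDr -acosN //.
have acos_itv (z : R) : -1 <= z <= 1 -> acos z \in `[0, pi].
  by move=> z1; rewrite in_itv /= acos_ge0 // acos_lepi.
by rewrite -(ltr_cos (acos_itv x x1) (acos_itv _ Ny1)) !acosK ?in_itv //= -subr_gt0 opprK.
Qed.

Lemma gangle_add_ltpi p q r : 1 < p -> 1 < q -> 1 < r -> 0 < gdet p q r ->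
  gangle q p r + gangle r p q < pi.
Proof.
move=> p_gt1 q_gt1 r_gt1 hD.
have hD' : 0 < gdet q p r by rewrite gdet_swapl.
have hD'' : 0 < gdet r p q by rewrite gdet_swapl gdet_swapr.
have /andP[_ gcos_lt1] := gcos_bounds q_gt1 r_gt1 hD.
apply: acos_add_ltpi; rewrite ?gcos_itv //.
rewrite gcos_add // divr_gt0 ?sinhg_gt0 // mulr_gt0 ?subr_gt0 //.
by rewrite addr_gt0 // mulr_gt0 ?sinhg_gt0 // (lt_trans ltr01).
Qed.

Lemma one_add_cos_gangle p q r : 1 < p -> 1 < q -> 1 < r -> 0 < gdet p q r ->
  1 + cos (gangle p q r - (gangle q p r + gangle r p q))
  = gdet p q r / ((p + 1) * (q - 1) * (r - 1)).
Proof.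
move=> p_gt1 q_gt1 r_gt1 hD.
have hD' : 0 < gdet q p r by rewrite gdet_swapl.
have hD'' : 0 < gdet r p q by rewrite gdet_swapl gdet_swapr.
rewrite cosB cosD sinD !cos_gangle // !sin_gangle //.
rewrite (gdet_swapl p q r) (gdet_swapl p r q) (gdet_swapr p q r).
have p0 := sinhg_gt0 p_gt1; have q0 := sinhg_gt0 q_gt1; have r0 := sinhg_gt0 r_gt1.
set sD := Num.sqrt (gdet p q r).
transitivity (1 + ((q * r - p) * ((p * r - q) * (p * q - r) - sD ^+ 2)
                   + sD ^+ 2 * ((p * q - r) + (p * r - q)))
                  / (sinhg p ^+ 2 * sinhg q ^+ 2 * sinhg r ^+ 2)).
  by rewrite /gcos; field; rewrite !gt_eqF.
rewrite sqr_sqrtr ?ltW // !sinhg_sqr ?ltW // /gdet.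
by field; rewrite !gt_eqF // ?subr_gt0 ?exprn_egt1 //; lra.
Qed.

Lemma sin_half_defect_sqr a b c :
  sin (a + (pi - a - b - c) / 2) ^+ 2 = (1 + cos (a - (b + c))) / 2.
Proof.
set u := (a - (b + c)) / 2.
have -> : a + (pi - a - b - c) / 2 = u + pi / 2 by rewrite /u; field.
have -> : a - (b + c) = u *+ 2 by rewrite /u; field.
by rewrite sinDpihalf cos_mulr2n; field.
Qed.

Lemma sin_half_defect_gt0 a b c : 0 < a < pi -> 0 < b -> 0 < c -> b + c < pi ->
  0 < sin (a + (pi - a - b - c) / 2).
Proof.
by move=> /andP[? ?] ? ? ?; apply: sin_gt0_pi; apply/andP; split; lra.
Qed.

Lemma sin_half_defect_gangle p q r :
  1 < p -> 1 < q -> 1 < r -> 0 < gdet p q r ->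
  let d := pi - gangle p q r - gangle q p r - gangle r p q in
  0 < sin (gangle p q r + d / 2) /\
  sin (gangle p q r + d / 2) ^+ 2 = gdet p q r / ((p + 1) * (q - 1) * (r - 1)) / 2.
Proof.
move=> p_gt1 q_gt1 r_gt1 hD d.
split; last by rewrite sin_half_defect_sqr one_add_cos_gangle.
have /andP[a2_gt0 _] : 0 < gangle q p r < pi.
  by apply: gangle_gt0_ltpi => //; rewrite gdet_swapl.
have /andP[a3_gt0 _] : 0 < gangle r p q < pi.
  by apply: gangle_gt0_ltpi => //; rewrite gdet_swapl gdet_swapr.
apply: sin_half_defect_gt0 a2_gt0 a3_gt0 (gangle_add_ltpi _ _ _ _) => //.
exact: gangle_gt0_ltpi.
Qed.

Lemma defect_sine_ratio p q r :
  1 < p -> 1 < q -> 1 < r -> 0 < gdet p q r ->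
  let a1 := gangle p q r in let a2 := gangle q p r in let a3 := gangle r p q in
  let d := pi - a1 - a2 - a3 in
  2 * (sin (a1 + d / 2) * sin (a2 + d / 2) * sin (a3 + d / 2))
    / (sin a1 * sin a2 * sin a3)
  = Num.sqrt ((r + 1) * (q + 1) * (p + 1) / 2).
Proof.
move=> p_gt1 q_gt1 r_gt1 hD a1 a2 a3 d.
have hD' : 0 < gdet q p r by rewrite gdet_swapl.
have hD'' : 0 < gdet r p q by rewrite gdet_swapl gdet_swapr.
have [w1_gt0 w1_sqr] := sin_half_defect_gangle p_gt1 q_gt1 r_gt1 hD.
have [w2_gt0 w2_sqr] := sin_half_defect_gangle q_gt1 p_gt1 r_gt1 hD'.
have [w3_gt0 w3_sqr] := sin_half_defect_gangle r_gt1 p_gt1 q_gt1 hD''.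
rewrite /= (gangleC r q p) -/a1 -/a2 -/a3 in w2_gt0 w2_sqr.
rewrite /= (gangleC p r q) (gangleC q r p) -/a1 -/a2 -/a3 in w3_gt0 w3_sqr.
rewrite -/a1 -/a2 -/a3 -/d in w1_gt0 w1_sqr.
have d2 : pi - a2 - a1 - a3 = d by rewrite /d; ring.
have d3 : pi - a3 - a1 - a2 = d by rewrite /d; ring.
rewrite d2 (gdet_swapl p q r) in w2_gt0 w2_sqr.
rewrite d3 (gdet_swapl p r q) (gdet_swapr p q r) in w3_gt0 w3_sqr.
have sin1 : sin a1 = Num.sqrt (gdet p q r) / (sinhg q * sinhg r) by exact: sin_gangle.
have sin2 : sin a2 = Num.sqrt (gdet p q r) / (sinhg p * sinhg r).
  by rewrite /a2 sin_gangle // gdet_swapl.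
have sin3 : sin a3 = Num.sqrt (gdet p q r) / (sinhg p * sinhg q).
  by rewrite /a3 sin_gangle // gdet_swapl gdet_swapr.
have p0 := sinhg_gt0 p_gt1; have q0 := sinhg_gt0 q_gt1; have r0 := sinhg_gt0 r_gt1.
have sD0 : 0 < Num.sqrt (gdet p q r) by rewrite sqrtr_gt0.
apply: (pexpIrn (ltn0Sn 1)); rewrite ?nnegrE ?sqrtr_ge0 //.
  by rewrite sin1 sin2 sin3 ltW // !(mulr_gt0, divr_gt0, invr_gt0).
rewrite sqr_sqrtr; last by rewrite divr_ge0 // !mulr_ge0 //; lra.
rewrite expr_div_n !exprMn w1_sqr w2_sqr w3_sqr sin1 sin2 sin3 !expr_div_n !exprMn.
rewrite sqr_sqrtr ?ltW // !sinhg_sqr ?ltW //.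
by field; rewrite !gt_eqF // ?subr_gt0 ?exprn_egt1 //; lra.
Qed.

Lemma gsine_circumradius p q r rho :
  1 < p -> 1 < q -> 1 < r -> 0 < gdet p q r -> 1 <= rho ->
  (rho ^+ 2 - 1) * gdet p q r = 2 * rho ^+ 2 * ((p - 1) * (q - 1) * (r - 1)) ->
  sinhg p * sinhg q * sinhg r / Num.sqrt (gdet p q r)
  = Num.sqrt ((r + 1) * (q + 1) * (p + 1) / 2) * (sinhg rho / rho).
Proof.
move=> p_gt1 q_gt1 r_gt1 hD rho_ge1 hrho.
have p0 := sinhg_gt0 p_gt1; have q0 := sinhg_gt0 q_gt1; have r0 := sinhg_gt0 r_gt1.
have sD0 : 0 < Num.sqrt (gdet p q r) by rewrite sqrtr_gt0.
have rho0 : 0 < rho by rewrite (lt_le_trans ltr01).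
have rho_ratio : (rho ^+ 2 - 1) / rho ^+ 2 = 2 * ((p - 1) * (q - 1) * (r - 1)) / gdet p q r.
  transitivity ((rho ^+ 2 - 1) * gdet p q r / (rho ^+ 2 * gdet p q r)).
    by field; rewrite !gt_eqF.
  by rewrite hrho; field; rewrite !gt_eqF.
apply: (pexpIrn (ltn0Sn 1)); rewrite ?nnegrE.
- by apply: ltW; rewrite divr_gt0 // !mulr_gt0.
- by rewrite mulr_ge0 ?sqrtr_ge0 ?divr_ge0 ?sinhg_ge0 ?ltW.
rewrite [LHS]expr_div_n [RHS]exprMn [in RHS]expr_div_n !exprMn.
have [p1 q1 r1] := And3 (ltW p_gt1) (ltW q_gt1) (ltW r_gt1).
rewrite !sinhg_sqr // !sqr_sqrtr ?ltW // ?rho_ratio; last first.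
  by rewrite divr_gt0 // !mulr_gt0 //; lra.
by field; rewrite gt_eqF.
Qed.

Lemma gsine_laws s p q r rho :
  1 < p -> 1 < q -> 1 < r -> 0 < gdet p q r -> 1 <= rho ->
  (rho ^+ 2 - 1) * gdet p q r = 2 * rho ^+ 2 * ((p - 1) * (q - 1) * (r - 1)) ->
  let a1 := gangle p q r in let a2 := gangle q p r in let a3 := gangle r p q in
  let d := pi - a1 - a2 - a3 in
  let Rc := s * (sinhg rho / rho) in
  [/\ s * sinhg p / sin a1 = s * sinhg q / sin a2,
      s * sinhg q / sin a2 = s * sinhg r / sin a3,
      s * sinhg r / sin a3 = Num.sqrt ((r + 1) * (q + 1) * (p + 1) / 2) * Rc &
      s * sinhg r / sin a3 =
        2 * (sin (a1 + d / 2) * sin (a2 + d / 2) * sin (a3 + d / 2))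
          / (sin a1 * sin a2 * sin a3) * Rc].
Proof.
move=> p_gt1 q_gt1 r_gt1 hD rho_ge1 hrho a1 a2 a3 d Rc.
have hD' : 0 < gdet q p r by rewrite gdet_swapl.
have hD'' : 0 < gdet r p q by rewrite gdet_swapl gdet_swapr.
set K := s * (sinhg p * sinhg q * sinhg r / Num.sqrt (gdet p q r)).
have law1 : s * sinhg p / sin a1 = K by rewrite -mulrA sinhg_div_sin_gangle.
have law2 : s * sinhg q / sin a2 = K.
  by rewrite -mulrA sinhg_div_sin_gangle // gdet_swapl /K; ring.
have law3 : s * sinhg r / sin a3 = K.
  by rewrite -mulrA sinhg_div_sin_gangle // gdet_swapl gdet_swapr /K; ring.
rewrite law1 law2 law3 defect_sine_ratio // /K /Rc.
rewrite (gsine_circumradius p_gt1 q_gt1 r_gt1 hD rho_ge1 hrho).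
by split => //; rewrite mulrCA.
Qed.

End GammaTrigonometry.

Section EinsteinGamma.
Variables (R : realType) (n : nat) (s : R).
Hypothesis s_gt0 : 0 < s.
Implicit Types (u v w A B C : 'rV[R]_n).

Let s2_gt0 : 0 < s ^+ 2. Proof. by rewrite exprn_gt0. Qed.

Lemma ball_dotv_lt u : in_ball s u -> dotv u u < s ^+ 2.
Proof. by rewrite -normv_sqr ltr_pXn2r // nnegrE ?sqrtr_ge0 // ltW. Qed.

Lemma gammav_gt0 u : in_ball s u -> 0 < gammav s u.
Proof.
move=> /ball_dotv_lt uu_lt.
by rewrite invr_gt0 sqrtr_gt0 normv_sqr subr_gt0 ltr_pdivrMr // mul1r.
Qed.

Lemma dotv_gammav u : in_ball s u -> dotv u u = s ^+ 2 * (1 - (gammav s u ^+ 2)^-1).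
Proof.
move=> /ball_dotv_lt uu_lt.
have k_gt0 : 0 < 1 - dotv u u / s ^+ 2 by rewrite subr_gt0 ltr_pdivrMr // mul1r.
rewrite /gammav normv_sqr exprVn sqr_sqrtr ?ltW // invrK.
by field; rewrite gt_eqF.
Qed.

Lemma ball_dotv_itv u v : in_ball s u -> in_ball s v -> - s ^+ 2 < dotv u v < s ^+ 2.
Proof.
move=> u_in v_in.
have uu_lt := ball_dotv_lt u_in; have vv_lt := ball_dotv_lt v_in.
have uv_lt : dotv u v ^+ 2 < s ^+ 2 * s ^+ 2.
  by apply: le_lt_trans (cauchy_schwarz u v) _; rewrite ltr_pM ?dotv_ge0.
rewrite -ltr_norml -(ltr_pXn2r (ltn0Sn 1)) ?nnegrE ?normr_ge0 ?(ltW s2_gt0) //.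
by rewrite real_normK ?num_real // -expr2.
Qed.

Let one_sub_dotv_gt0 u v : in_ball s u -> in_ball s v -> 0 < 1 - dotv u v / s ^+ 2.
Proof.
move=> u_in v_in; have /andP[_ uv_lt] := ball_dotv_itv u_in v_in.
by rewrite subr_gt0 ltr_pdivrMr // mul1r.
Qed.

Let one_add_dotv_gt0 u v : in_ball s u -> in_ball s v -> 0 < 1 + dotv u v / s ^+ 2.
Proof.
move=> u_in v_in; have /andP[uv_gt _] := ball_dotv_itv u_in v_in.
by rewrite -ltrBlDl sub0r ltr_pdivlMr // mulN1r.
Qed.

Let sub_dotv_neq0 u v : in_ball s u -> in_ball s v -> s ^+ 2 - dotv u v != 0.
Proof.
by move=> u_in v_in; have /andP[_ uv_lt] := ball_dotv_itv u_in v_in; rewrite subr_eq0 gt_eqF.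
Qed.

Lemma gammavN u : gammav s (- u) = gammav s u.
Proof. by rewrite /gammav /normv dotvNl dotvNr opprK. Qed.

Lemma gdiffE A B : gdiff s A B =
  ((1 - dotv A B / s ^+ 2)^-1
     * (-1 + (s ^+ 2)^-1 * (gammav s A / (1 + gammav s A)) * dotv A B)) *: A
  + ((1 - dotv A B / s ^+ 2)^-1 * (gammav s A)^-1) *: B.
Proof.
rewrite /gdiff /eadd /eopp gammavN dotvNl mulNr.
by apply/rowP => i; rewrite !mxE; ring.
Qed.

(* The gamma identity: [gamma_pair A B] is the Lorentz factor of [gdiff s A B],
   see [gammal_gdist]. *)
Definition gamma_pair A B := gammav s A * gammav s B * (1 - dotv A B / s ^+ 2).

Lemma gamma_pairC A B : gamma_pair A B = gamma_pair B A.
Proof. by rewrite /gamma_pair (dotvC A B); ring. Qed.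

Lemma gamma_pair_gt0 A B : in_ball s A -> in_ball s B -> 0 < gamma_pair A B.
Proof.
by move=> A_in B_in; rewrite !mulr_gt0 ?gammav_gt0 ?one_sub_dotv_gt0.
Qed.

Lemma gamma_pair_id A : in_ball s A -> gamma_pair A A = 1.
Proof.
move=> A_in; have gA_gt0 := gammav_gt0 A_in.
by rewrite /gamma_pair (dotv_gammav A_in); field; rewrite !gt_eqF.
Qed.

Lemma dotv_gdiff A B C : in_ball s A -> in_ball s B -> in_ball s C ->
  dotv (gdiff s A B) (gdiff s A C)
  = s ^+ 2 * (1 - gamma_pair B C / (gamma_pair A B * gamma_pair A C)).
Proof.
move=> A_in B_in C_in.
have gA := gammav_gt0 A_in; have gB := gammav_gt0 B_in; have gC := gammav_gt0 C_in.
rewrite !gdiffE !dotvDl !dotvDr !dotvZl !dotvZr (dotv_gammav A_in) (dotvC B A).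
rewrite /gamma_pair; field.
by rewrite !sub_dotv_neq0 // !gt_eqF // addr_gt0.
Qed.

Lemma dotv_gdiff_self A B : in_ball s A -> in_ball s B ->
  dotv (gdiff s A B) (gdiff s A B) = s ^+ 2 * (1 - (gamma_pair A B ^+ 2)^-1).
Proof. by move=> A_in B_in; rewrite dotv_gdiff // gamma_pair_id // div1r. Qed.

Lemma gamma_pair_ge1 A B : in_ball s A -> in_ball s B -> 1 <= gamma_pair A B.
Proof.
move=> A_in B_in; have g_gt0 := gamma_pair_gt0 A_in B_in.
have := dotv_ge0 (gdiff s A B).
rewrite dotv_gdiff_self // pmulr_rge0 // subr_ge0 invf_le1 ?exprn_gt0 //.
by rewrite expr_ge1 // ltW.
Qed.

Lemma gdist_sinhg A B : in_ball s A -> in_ball s B ->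
  gdist s A B = s * (sinhg (gamma_pair A B) / gamma_pair A B).
Proof.
move=> A_in B_in; set g := gamma_pair A B.
have g_ge1 : 1 <= g := gamma_pair_ge1 A_in B_in.
have g_gt0 : 0 < g by rewrite (lt_le_trans ltr01).
apply: (pexpIrn (ltn0Sn 1)); rewrite ?nnegrE ?sqrtr_ge0 //.
  by rewrite mulr_ge0 ?divr_ge0 ?sinhg_ge0 ?ltW.
rewrite normv_sqr dotv_gdiff_self // -/g [RHS]exprMn expr_div_n sinhg_sqr //.
by field; rewrite gt_eqF.
Qed.

Lemma gammal_gdist A B : in_ball s A -> in_ball s B ->
  gammal s (gdist s A B) = gamma_pair A B.
Proof.
move=> A_in B_in; have g_gt0 := gamma_pair_gt0 A_in B_in.
rewrite /gammal /gdist normv_sqr dotv_gdiff_self //.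
have -> : 1 - s ^+ 2 * (1 - (gamma_pair A B ^+ 2)^-1) / s ^+ 2 = (gamma_pair A B)^-1 ^+ 2.
  by rewrite exprVn; field; rewrite !gt_eqF.
by rewrite sqrtr_sqr ger0_norm ?invrK // invr_ge0 ltW.
Qed.

Lemma gammal_mul_gdist A B : in_ball s A -> in_ball s B ->
  gammal s (gdist s A B) * gdist s A B = s * sinhg (gamma_pair A B).
Proof.
move=> A_in B_in; have g_gt0 := gamma_pair_gt0 A_in B_in.
by rewrite gammal_gdist // gdist_sinhg //; field; rewrite gt_eqF.
Qed.

Lemma gyroangle_gangle A B C : in_ball s A -> in_ball s B -> in_ball s C ->
  gyroangle s A B C = gangle (gamma_pair B C) (gamma_pair A C) (gamma_pair A B).
Proof.
move=> A_in B_in C_in.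
have gB := gamma_pair_gt0 A_in B_in; have gC := gamma_pair_gt0 A_in C_in.
rewrite /gyroangle /gangle /gcos dotv_gdiff // -!/(gdist _ _ _) !gdist_sinhg //.
congr acos; move: gB gC.
move: (gamma_pair B C) (gamma_pair A B) (gamma_pair A C) => a b c b_gt0 c_gt0.
rewrite !invfM; set iSb := (sinhg b)^-1; set iSc := (sinhg c)^-1.
by field; rewrite !gt_eqF.
Qed.

Definition eadd_numer A w := A + (gammav s A)^-1 *: w
  + ((s ^+ 2)^-1 * (gammav s A / (1 + gammav s A)) * dotv A w) *: A.

Lemma eaddE A w : eadd s A w = (1 + dotv A w / s ^+ 2)^-1 *: eadd_numer A w.
Proof. by []. Qed.

(* Left cancellation [A (+) ((-A) (+) B) = B], with the denominator cleared. *)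
Lemma eadd_numer_gdiff A B : in_ball s A -> in_ball s B ->
  eadd_numer A (gdiff s A B) = (1 + dotv A (gdiff s A B) / s ^+ 2) *: B.
Proof.
move=> A_in B_in; have gA := gammav_gt0 A_in.
rewrite /eadd_numer !gdiffE !dotvDr !dotvZr (dotv_gammav A_in).
apply/rowP => i; rewrite !mxE.
by field; rewrite sub_dotv_neq0 // !gt_eqF // addr_gt0.
Qed.

Lemma eadd_span_barycentric A1 A2 A3 c1 c2 :
  let w := c1 *: gdiff s A1 A2 + c2 *: gdiff s A1 A3 in
  in_ball s A1 -> in_ball s A2 -> in_ball s A3 -> in_ball s w ->
  (1 + dotv A1 w / s ^+ 2) *: eadd s A1 w =
  (1 - c1 - c2) *: A1 + (c1 * (1 + dotv A1 (gdiff s A1 A2) / s ^+ 2)) *: A2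
   + (c2 * (1 + dotv A1 (gdiff s A1 A3) / s ^+ 2)) *: A3.
Proof.
move=> w A1_in A2_in A3_in w_in.
(* the numerator of [A1 (+) w] is affine in [w] *)
rewrite eaddE scalerA mulfV ?gt_eqF ?one_add_dotv_gt0 // scale1r.
rewrite -![(_ * _) *: _]scalerA -!eadd_numer_gdiff // /eadd_numer /w.
by rewrite !dotvDr !dotvZr; apply/rowP => i; rewrite !mxE; ring.
Qed.

(* [gamma_pair P X / gammav s X] is affine in [X]. *)
Lemma gamma_pair_barycentric A1 A2 A3 O m1 m2 m3 :
  in_ball s A1 -> in_ball s A2 -> in_ball s A3 -> m1 + m2 + m3 != 0 ->
  (m1 + m2 + m3) *: O = m1 *: A1 + m2 *: A2 + m3 *: A3 ->
  forall P, gamma_pair P O =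
      gammav s O * m1 / ((m1 + m2 + m3) * gammav s A1) * gamma_pair P A1
    + gammav s O * m2 / ((m1 + m2 + m3) * gammav s A2) * gamma_pair P A2
    + gammav s O * m3 / ((m1 + m2 + m3) * gammav s A3) * gamma_pair P A3.
Proof.
move=> A1_in A2_in A3_in m_neq0 eO P; rewrite /gamma_pair.
have -> : dotv P O = (m1 + m2 + m3)^-1 * (m1 * dotv P A1 + m2 * dotv P A2 + m3 * dotv P A3).
  by rewrite -!dotvZr -!dotvDr -eO dotvZr mulKf.
have g1 := gammav_gt0 A1_in; have g2 := gammav_gt0 A2_in; have g3 := gammav_gt0 A3_in.
by field; rewrite m_neq0 !gt_eqF.
Qed.

Lemma gyrotriangle_gdet_gt0 A1 A2 A3 : gyrotriangle s A1 A2 A3 ->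
  0 < gdet (gamma_pair A2 A3) (gamma_pair A1 A3) (gamma_pair A1 A2).
Proof.
move=> [A1_in A2_in A3_in indep].
have := cauchy_schwarz_lt indep.
rewrite dotv_gdiff // !dotv_gdiff_self //.
move: (gamma_pair_gt0 A1_in A3_in) (gamma_pair_gt0 A1_in A2_in).
move: (gamma_pair A2 A3) (gamma_pair A1 A3) (gamma_pair A1 A2) => p q r q_gt0 r_gt0.
rewrite -subr_gt0.
have -> : s ^+ 2 * (1 - (r ^+ 2)^-1) * (s ^+ 2 * (1 - (q ^+ 2)^-1))
          - (s ^+ 2 * (1 - p / (r * q))) ^+ 2 = (s ^+ 2 / (r * q)) ^+ 2 * gdet p q r.
  by rewrite /gdet; field; rewrite !gt_eqF.
by rewrite pmulr_rgt0 // exprn_gt0 // divr_gt0 // mulr_gt0.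
Qed.

Lemma circumgyrocenter_gamma A1 A2 A3 O :
  gyrotriangle s A1 A2 A3 -> circumgyrocenter s A1 A2 A3 O ->
  let p := gamma_pair A2 A3 in let q := gamma_pair A1 A3 in
  let r := gamma_pair A1 A2 in let rho := gamma_pair A1 O in
  (rho ^+ 2 - 1) * gdet p q r = 2 * rho ^+ 2 * ((p - 1) * (q - 1) * (r - 1)).
Proof.
move=> [A1_in A2_in A3_in _] [ O_in [w [w_in [[c1 [c2 ew]] eO]]] e12 e13] p q r rho.
subst w.
have rho2 : gamma_pair A2 O = rho by rewrite /rho -!gammal_gdist // e12.
have rho3 : gamma_pair A3 O = rho by rewrite /rho -!gammal_gdist // e13.
have := eadd_span_barycentric A1_in A2_in A3_in w_in; rewrite -eO.
set m1 := 1 - c1 - c2; set m2 := c1 * _; set m3 := c2 * _.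
have m_eq : 1 + dotv A1 (c1 *: gdiff s A1 A2 + c2 *: gdiff s A1 A3) / s ^+ 2
            = m1 + m2 + m3.
  by rewrite /m1 /m2 /m3 dotvDr !dotvZr; ring.
have m_neq0 : m1 + m2 + m3 != 0 by rewrite -m_eq gt_eqF // one_add_dotv_gt0.
rewrite m_eq => /(gamma_pair_barycentric A1_in A2_in A3_in m_neq0).
set l1 := _ / (_ * gammav s A1); set l2 := _ / (_ * gammav s A2).
set l3 := _ / (_ * gammav s A3) => gO.
apply: (gdet_circum_relation (l1 := l1) (l2 := l2) (l3 := l3)).
- by rewrite /rho gO gamma_pair_id // mulr1.
- by rewrite -rho2 gO (gamma_pairC A2 A1) gamma_pair_id // mulr1.
- by rewrite -rho3 gO (gamma_pairC A3 A1) (gamma_pairC A3 A2) gamma_pair_id // mulr1.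
- rewrite -(gamma_pair_id O_in) gO !(gamma_pairC O) rho2 rho3 -/rho; ring.
Qed.

End EinsteinGamma.

Theorem mainTheorem8 (R : realType) (n : nat) (s : R)
    (A1 A2 A3 O : 'rV[R]_n) :
  0 < s -> (2 <= n)%N ->
  gyrotriangle s A1 A2 A3 ->
  circumgyrocenter s A1 A2 A3 O ->
  let alpha1 := gyroangle s A1 A2 A3 in
  let alpha2 := gyroangle s A2 A1 A3 in
  let alpha3 := gyroangle s A3 A1 A2 in
  let a23 := gdist s A2 A3 in
  let a13 := gdist s A1 A3 in
  let a12 := gdist s A1 A2 in
  let g23 := gammal s a23 in
  let g13 := gammal s a13 in
  let g12 := gammal s a12 in
  let delta := pi - alpha1 - alpha2 - alpha3 in
  let Rc := gdist s A1 O in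
  [/\ g23 * a23 / sin alpha1 = g13 * a13 / sin alpha2,
      g13 * a13 / sin alpha2 = g12 * a12 / sin alpha3,
      g12 * a12 / sin alpha3 =
        Num.sqrt ((g12 + 1) * (g13 + 1) * (g23 + 1) / 2) * Rc &
      g12 * a12 / sin alpha3 =
        2 * (sin (alpha1 + delta / 2) * sin (alpha2 + delta / 2)
             * sin (alpha3 + delta / 2))
          / (sin alpha1 * sin alpha2 * sin alpha3) * Rc].
Proof.
move=> s_gt0 _ tri circ alpha1 alpha2 alpha3 a23 a13 a12 g23 g13 g12 delta Rc.
have [A1_in A2_in A3_in _] := tri; have [ O_in _ _ _] := circ.
have gdet_gt0 := gyrotriangle_gdet_gt0 s_gt0 tri.
have [p_gt1 q_gt1 r_gt1] := gdet_gt0_gt1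
  (gamma_pair_ge1 s_gt0 A2_in A3_in) (gamma_pair_ge1 s_gt0 A1_in A3_in)
  (gamma_pair_ge1 s_gt0 A1_in A2_in) gdet_gt0.
rewrite /Rc /delta /alpha1 /alpha2 /alpha3 /g23 /g13 /g12 /a23 /a13 /a12.
rewrite !gammal_mul_gdist // !gammal_gdist // !gyroangle_gangle // gdist_sinhg //.
rewrite (gamma_pairC s A2 A1) (gamma_pairC s A3 A1) (gamma_pairC s A3 A2).
apply: gsine_laws => //; first exact: gamma_pair_ge1.
exact: circumgyrocenter_gamma.
Qed.
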